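(* The gauge-invariant subregion algebra satisfies $$\widetilde{\mathcal A}_r:=\Pi_{GI}\mathcal A_r\Pi_{GI}=\hat{\mathcal A}_r^\Pi\,\Pi_{GI}=\{\hat{\mathcal O}\Pi_{GI}:\hat{\mathcal O}\in\hat{\mathcal A}_r,\ [\hat{\mathcal O},\Pi_{GI}]=0\}.$$
   Context: Setup. Let $G$ be a compact Lie group (possibly finite) with normalized Haar measure $dg$ ($\int dg=1$). Let $\Lambda=(V,E)$ be a finite directed graph; loops and multiple edges are allowed. Each edge $e$ carries $\mathcal H_e=L^2(G)$ with unitaries $L_e(g)|h\rangle_e=|gh\rangle_e$ and $R_e(g^{-1})|h\rangle_e=|hg^{-1}\rangle_e$. Each vertex $v$ carries a Hilbert space $\mathcal H_v$ with a unitary representation $U_v$ of $G$. All these spaces are taken finite-dimensional by truncating to finitely many irreducible isotypic sectors, which are invariant under the group actions. The pre-gauged space is $\mathcal H=\bigotimes_v\mathcal H_v\otimes\bigotimes_e\mathcal H_e$. The gauge transformation at $v$ is $A_v(g)=U_v(g)\prod_{e\in E^-(v)}L_e(g)\prod_{e\in E^+(v)}R_e(g^{-1})$, where $E^-(v)$ is the set of edges oriented out of $v$ and $E^+(v)$ the set of edges oriented into $v$. Set $\Pi_v=\int dg\,A_v(g)$; these are mutually commuting orthogonal projections. Set $\Pi_{GI}=\prod_v\Pi_v$. Subregions. A subregion $r$ is an arbitrary subset of $V\cup E$, and $\bar r$ is its complement. Let $\mathcal H_r=\bigotimes_{x\in r}\mathcal H_x$ and $\mathcal A_r=\mathcal B(\mathcal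 H_r)\otimes 1_{\bar r}$. Let $V_r$ be the set of vertices $v$ such that $v$ and all edges incident to $v$ lie in $r$, and put $\Pi_{V_r}=\prod_{v\in V_r}\Pi_v$. Define $\hat{\mathcal A}_r=\{\Pi_{V_r}\mathcal O\Pi_{V_r}:\mathcal O\in\mathcal A_r\}$. *)

From HB Require Import structures.
From mathcomp Require Import all_boot all_order all_algebra.
From mathcomp Require Import complex.
From mathcomp Require Import classical_sets reals measure lebesgue_measure
  lebesgue_integral probability.

Set Implicit Arguments.
Unset Strict Implicit.
Unset Printing Implicit Defensive.

Import Order.TTheory GRing.Theory Num.Theory.
Local Open Scope ring_scope.

(* The compact group G, modelled as an abstract group carried by a          *)
(* measurable space, equipped with its normalized Haar measure mu: a        *)
(* probability measure invariant under left and right translations.         *)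

Definition is_group (G : Type) (mul : G -> G -> G) (inv : G -> G) (one : G)
  : Prop :=
  [/\ forall a b c, mul a (mul b c) = mul (mul a b) c,
      forall a, mul one a = a /\ mul a one = a
    & forall a, mul (inv a) a = one /\ mul a (inv a) = one].

Definition is_haar (R : realType) (d : measure_display) (G : measurableType d)
  (mul : G -> G -> G) (mu : probability G R) : Prop :=
  forall h : G,
    [/\ measurable_fun setT (fun g => mul h g),
        measurable_fun setT (fun g => mul g h),
        (forall A : set G, measurable A ->
           mu ((fun g => mul h g) @^-1` A)%classic = mu A)
      & (forall A : set G, measurable A ->
           mu ((fun g => mul g h) @^-1` A)%classic = mu A)].

Definition cint (R : realType) (d : measure_display) (G : measurableType d)
  (mu : probability G R) (f : G -> R[i]) : R[i] :=
  Complex (Rintegral mu setT (fun g => complex.Re (f g)))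
          (Rintegral mu setT (fun g => complex.Im (f g))).

Definition adj (R : realType) m n (A : 'M[R[i]]_(m, n)) : 'M[R[i]]_(n, m) :=
  (map_mx (fun z : R[i] => Num.conj z) A)^T.

Definition unitary_rep (R : realType) (d : measure_display)
  (G : measurableType d) (mul : G -> G -> G) (one : G) n
  (rho : G -> 'M[R[i]]_n) : Prop :=
  [/\ rho one = 1%:M,
      forall g h, rho (mul g h) = rho g *m rho h,
      forall g, rho g *m adj (rho g) = 1%:M
    & forall i j, measurable_fun setT (fun g => complex.Re (rho g i j)) /\
                  measurable_fun setT (fun g => complex.Im (rho g i j))].

(* Sites are V + E; site x carries C^(dim x).                               *)

Section Lattice.
Variables (V E : finType) (dim : V + E -> nat).

Definition site := (V + E)%type.

(* Basis configurations of the pre-gauged space  H = (x)_x C^(dim x). *)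
Definition conf := {dffun forall x : site, 'I_(dim x)}.

Definition op (R : realType) := 'M[R[i]]_#|{: conf}|.

Definition mxo (R : realType) (f : conf -> conf -> R[i]) : op R :=
  \matrix_(i, j) f (enum_val i) (enum_val j).

Definition tens (R : realType) (M : forall x : site, 'M[R[i]]_(dim x)) : op R :=
  mxo (fun c c' => \prod_(x : site) M x (c x) (c' x)).

Definition rconf (r : {set site}) :=
  {dffun forall y : {x : site | x \in r}, 'I_(dim (val y))}.

Definition restr (r : {set site}) (c : conf) : rconf r :=
  [ffun y => c (val y)].

(* o (x) 1_{rbar}  for o in B(H_r). *)
Definition embed (R : realType) (r : {set site})
  (o : 'M[R[i]]_#|{: rconf r}|) : op R :=
  mxo (fun c c' =>
     o (enum_rank (restr r c)) (enum_rank (restr r c'))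
     * ([forall x in ~: r, c x == c' x])%:R).

Definition in_alg (R : realType) (r : {set site}) (O : op R) : Prop :=
  exists o : 'M[R[i]]_#|{: rconf r}|, O = embed o.

Section Gauge.
Variables (R : realType) (d : measure_display) (G : measurableType d).
Variables (src tgt : E -> V).
Variables (U : forall v : V, G -> 'M[R[i]]_(dim (inl v))).
Variables (L Rinv : forall e : E, G -> 'M[R[i]]_(dim (inr e))).
(* Rinv e g stands for R_e(g^-1), i.e. |h> |-> |h g^-1>. *)

Definition gauge_site (v : V) (g : G) (x : site) : 'M[R[i]]_(dim x) :=
  match x as x' return 'M[R[i]]_(dim x') with
  | inl w => if w == v then U w g else 1%:M
  | inr e => (if src e == v then L e g else 1%:M)
             *m (if tgt e == v then Rinv e g else 1%:M)
  end.

Definition gauge (v : V) (g : G) : op R := tens (gauge_site v g).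

Definition Pi (mu : probability G R) (v : V) : op R :=
  \matrix_(i, j) cint mu (fun g => gauge v g i j).

Definition Pi_GI (mu : probability G R) : op R := \prod_(v : V) Pi mu v.

Definition Vr (r : {set site}) : {set V} :=
  [set v | (inl v \in r) &&
           [forall e : E, ((src e == v) || (tgt e == v)) ==> (inr e \in r)]].

Definition Pi_Vr (mu : probability G R) (r : {set site}) : op R :=
  \prod_(v in Vr r) Pi mu v.

Definition in_hat_alg (mu : probability G R) (r : {set site}) (X : op R)
  : Prop :=
  exists O : op R, in_alg r O /\ X = Pi_Vr mu r *m O *m Pi_Vr mu r.

End Gauge.
End Lattice.

(* Twirl an observable [O] of [A_r] over all gauge transformations,
   [O' := prod_v \int dg A_v(g)^-1 O A_v(g)].  Each [A_v(g)] is a tensor product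
   of site unitaries, so conjugation maps [o (x) 1] to [o' (x) 1] and [O'] stays
   in [A_r].  By invariance of the Haar measure [O'] commutes with every [A_v(h)],
   hence with every [Pi_v] and with [Pi_GI]; and since [Pi_GI] absorbs [A_v(g)]
   on both sides, [Pi_GI O' Pi_GI = Pi_GI O Pi_GI].  As [Pi_V_r Pi_GI = Pi_GI =
   Pi_GI Pi_V_r], [Ohat := Pi_V_r O' Pi_V_r] then satisfies [Ohat Pi_GI =
   Pi_GI O Pi_GI]; conversely, for [Ohat = Pi_V_r O Pi_V_r] commuting with
   [Pi_GI], [Ohat Pi_GI = Pi_GI Ohat Pi_GI = Pi_GI O Pi_GI]. *)

From Pilot Require Import Defs.
From HB Require Import structures.
From mathcomp Require Import all_boot all_order all_algebra.
From mathcomp Require Import complex.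
From mathcomp Require Import classical_sets reals measure lebesgue_measure
  lebesgue_integral probability.
From mathcomp Require Import boolp ereal measurable_realfun lra.

Set Implicit Arguments.
Unset Strict Implicit.
Unset Printing Implicit Defensive.
Import Order.TTheory GRing.Theory Num.Theory.
Local Open Scope ring_scope.

Section ComplexParts.
Variable R : realType.

Lemma ReD (z w : R[i]) : complex.Re (z + w) = complex.Re z + complex.Re w.
Proof. by case: z w => a b [c e]. Qed.

Lemma ImD (z w : R[i]) : complex.Im (z + w) = complex.Im z + complex.Im w.
Proof. by case: z w => a b [c e]. Qed.

Lemma ReM (z w : R[i]) :
  complex.Re (z * w) = complex.Re z * complex.Re w - complex.Im z * complex.Im w.
Proof. by case: z w => a b [c e]. Qed.

Lemma ImM (z w : R[i]) :
  complex.Im (z * w) = complex.Re z * complex.Im w + complex.Im z * complex.Re w.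
Proof. by case: z w => a b [c e]. Qed.

Lemma Re_sum (I : Type) (s : seq I) (f : I -> R[i]) :
  complex.Re (\sum_(k <- s) f k) = \sum_(k <- s) complex.Re (f k).
Proof. by elim: s => [|k s IH]; rewrite ?big_nil // !big_cons ReD IH. Qed.

End ComplexParts.

Section HaarIntegral.
Context (R : realType) (d : measure_display) (G : measurableType d)
  (mu : probability G R).

Definition bounded_mfun (f : G -> R) :=
  measurable_fun setT f /\ exists M, forall g, `|f g| <= M.

Lemma bounded_mfun_integrable f :
  bounded_mfun f -> mu.-integrable setT (EFin \o f).
Proof.
case=> mf [M hM]; apply: measurable_bounded_integrable => //.
  by rewrite (le_lt_trans (probability_le1 mu measurableT)) ?ltry.
exists M; split; first exact: num_real.
by move=> N hN x _; apply: le_trans (hM x) (ltW hN).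
Qed.

Lemma bounded_mfun_cst c : bounded_mfun (fun _ => c).
Proof. by split; [exact: measurable_cst | exists `|c|]. Qed.

Lemma bounded_mfunD f h :
  bounded_mfun f -> bounded_mfun h -> bounded_mfun (fun g => f g + h g).
Proof.
case=> mf [M hM] [mh [N hN]]; split; first exact: measurable_funD.
by exists (M + N) => g; apply: le_trans (ler_normD _ _) (lerD _ _).
Qed.

Lemma bounded_mfunN f : bounded_mfun f -> bounded_mfun (fun g => - f g).
Proof.
case=> mf [M hM]; split; first exact: measurable_funN.
by exists M => g; rewrite normrN.
Qed.

Lemma bounded_mfunM f h :
  bounded_mfun f -> bounded_mfun h -> bounded_mfun (fun g => f g * h g).
Proof.
case=> mf [M hM] [mh [N hN]]; split; first exact: measurable_funM.
by exists (M * N) => g; rewrite normrM ler_pM.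
Qed.

Lemma Rintegral_prob_cst c : Rintegral mu setT (fun _ => c) = c.
Proof.
rewrite Rintegral_cst // -[RHS]mulr1 (_ : 1 = fine (1%E : \bar R)) //.
by congr (c * fine _); exact: probability_setT.
Qed.

Definition measure_preserving (phi : G -> G) :=
  measurable_fun setT phi /\
  forall A, measurable A -> mu (phi @^-1` A)%classic = mu A.

Lemma Rintegral_preserving (phi : G -> G) f :
  measure_preserving phi -> bounded_mfun f ->
  Rintegral mu setT (fun g => f (phi g)) = Rintegral mu setT f.
Proof.
move=> [mphi hphi] [mf [M hM]]; rewrite /Rintegral; congr fine.
have intf : mu.-integrable (phi @^-1` setT)%classic ((EFin \o f) \o phi).
  rewrite preimage_setT; apply: (bounded_mfun_integrable (f := f \o phi)).
  by split; [exact: measurableT_comp | exists M => g; exact: hM].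
have := integral_pushforward mphi ((measurable_EFinP _ _).2 mf) intf measurableT.
rewrite preimage_setT => <-.
by apply: eq_measure_integral => A mA _ /=; rewrite /pushforward hphi.
Qed.



Definition cbounded_mfun (f : G -> R[i]) :=
  bounded_mfun (fun g => complex.Re (f g)) /\
  bounded_mfun (fun g => complex.Im (f g)).

Lemma cbounded_mfun_cst c : cbounded_mfun (fun _ => c).
Proof. split; exact: bounded_mfun_cst. Qed.

Lemma cbounded_mfunD f h :
  cbounded_mfun f -> cbounded_mfun h -> cbounded_mfun (fun g => f g + h g).
Proof.
case=> [a b] [c e]; split.
  by under [X in bounded_mfun X]funext do rewrite ReD; exact: bounded_mfunD.
by under [X in bounded_mfun X]funext do rewrite ImD; exact: bounded_mfunD.
Qed.

Lemma cbounded_mfunM f h :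
  cbounded_mfun f -> cbounded_mfun h -> cbounded_mfun (fun g => f g * h g).
Proof.
case=> [a b] [c e]; split.
  under [X in bounded_mfun X]funext do rewrite ReM.
  by apply: bounded_mfunD; [|apply: bounded_mfunN]; exact: bounded_mfunM.
under [X in bounded_mfun X]funext do rewrite ImM.
by apply: bounded_mfunD; exact: bounded_mfunM.
Qed.

Lemma cbounded_mfun_sum (I : Type) (s : seq I) (F : I -> G -> R[i]) :
  (forall i, cbounded_mfun (F i)) ->
  cbounded_mfun (fun g => \sum_(i <- s) F i g).
Proof.
move=> hF; elim: s => [|i s IH].
  by under [X in cbounded_mfun X]funext do rewrite big_nil; exact: cbounded_mfun_cst.
by under [X in cbounded_mfun X]funext do rewrite big_cons; exact: cbounded_mfunD.
Qed.

Lemma cbounded_mfun_prod (I : Type) (s : seq I) (F : I -> G -> R[i]) :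
  (forall i, cbounded_mfun (F i)) ->
  cbounded_mfun (fun g => \prod_(i <- s) F i g).
Proof.
move=> hF; elim: s => [|i s IH].
  by under [X in cbounded_mfun X]funext do rewrite big_nil; exact: cbounded_mfun_cst.
by under [X in cbounded_mfun X]funext do rewrite big_cons; exact: cbounded_mfunM.
Qed.

Lemma cbounded_mfun_conj f :
  cbounded_mfun f -> cbounded_mfun (fun g => Num.conj (f g)).
Proof.
have eRe : (fun g => complex.Re (Num.conj (f g))) = fun g => complex.Re (f g).
  by apply: funext => g; case: (f g).
have eIm : (fun g => complex.Im (Num.conj (f g))) = fun g => - complex.Im (f g).
  by apply: funext => g; case: (f g).
by rewrite /cbounded_mfun eRe eIm => -[a /bounded_mfunN b].
Qed.

Lemma cint_add f h : cbounded_mfun f -> cbounded_mfun h ->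
  cint mu (fun g => f g + h g) = cint mu f + cint mu h.
Proof.
case=> [/bounded_mfun_integrable a /bounded_mfun_integrable b].
case=> [/bounded_mfun_integrable c /bounded_mfun_integrable e]; rewrite /cint.
under [X in Complex X _]eq_Rintegral do rewrite ReD.
under [X in Complex _ X]eq_Rintegral do rewrite ImD.
by rewrite !RintegralD.
Qed.

Lemma cint_mull c f : cbounded_mfun f -> cint mu (fun g => c * f g) = c * cint mu f.
Proof.
case=> [a b]; rewrite /cint.
under [X in Complex X _]eq_Rintegral do rewrite ReM.
under [X in Complex _ X]eq_Rintegral do rewrite ImM.
have intZ k h : bounded_mfun h -> mu.-integrable setT (EFin \o (fun g => k * h g)).
  move=> bh; apply/bounded_mfun_integrable/bounded_mfunM => //.
  exact: bounded_mfun_cst.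
case: c => x y /=.
rewrite RintegralB ?RintegralD ?intZ // !RintegralZl //; exact: bounded_mfun_integrable.
Qed.

Lemma cint_mulr c f : cbounded_mfun f -> cint mu (fun g => f g * c) = cint mu f * c.
Proof.
by move=> bf; rewrite mulrC -cint_mull //; under eq_fun do rewrite mulrC.
Qed.

Lemma cint_cst c : cint mu (fun _ => c) = c.
Proof. by rewrite /cint !Rintegral_prob_cst; case: c. Qed.

Lemma cint_sum (I : Type) (s : seq I) (F : I -> G -> R[i]) :
  (forall i, cbounded_mfun (F i)) ->
  cint mu (fun g => \sum_(i <- s) F i g) = \sum_(i <- s) cint mu (F i).
Proof.
move=> hF; elim: s => [|i s IH].
  by under eq_fun do rewrite big_nil; rewrite cint_cst big_nil.
under eq_fun do rewrite big_cons.
by rewrite cint_add ?big_cons ?IH //; exact: cbounded_mfun_sum.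
Qed.

Lemma cint_preserving (phi : G -> G) f : measure_preserving phi ->
  cbounded_mfun f -> cint mu (fun g => f (phi g)) = cint mu f.
Proof.
move=> hphi [a b]; rewrite /cint.
rewrite (Rintegral_preserving (f := fun g => complex.Re (f g))) //.
by rewrite (Rintegral_preserving (f := fun g => complex.Im (f g))).
Qed.

Definition mxint n (F : G -> 'M[R[i]]_n) : 'M[R[i]]_n :=
  \matrix_(i, j) cint mu (fun g => F g i j).

Definition mx_bounded_mfun n (F : G -> 'M[R[i]]_n) :=
  forall i j, cbounded_mfun (fun g => F g i j).

Lemma mx_bounded_mfun_cst n (M : 'M[R[i]]_n) : mx_bounded_mfun (fun _ => M).
Proof. move=> i j; exact: cbounded_mfun_cst. Qed.

Lemma mx_bounded_mfunM n (F H : G -> 'M[R[i]]_n) :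
  mx_bounded_mfun F -> mx_bounded_mfun H -> mx_bounded_mfun (fun g => F g *m H g).
Proof.
move=> bF bH i j; under [X in cbounded_mfun X]funext do rewrite mxE.
by apply: cbounded_mfun_sum => k; exact: cbounded_mfunM.
Qed.

Lemma mx_bounded_mfunMl n (M : 'M[R[i]]_n) F :
  mx_bounded_mfun F -> mx_bounded_mfun (fun g => M *m F g).
Proof. by apply: mx_bounded_mfunM; exact: mx_bounded_mfun_cst. Qed.

Lemma mxint_cst n (M : 'M[R[i]]_n) : mxint (fun _ => M) = M.
Proof. by apply/matrixP => i j; rewrite mxE cint_cst. Qed.

Lemma mxint_mull n (M : 'M[R[i]]_n) F :
  mx_bounded_mfun F -> mxint (fun g => M *m F g) = M *m mxint F.
Proof.
move=> bF; apply/matrixP => i j; rewrite !mxE.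
under eq_fun do rewrite mxE.
rewrite cint_sum => [|k]; last by apply: cbounded_mfunM => //; exact: cbounded_mfun_cst.
by apply: eq_bigr => k _; rewrite mxE cint_mull.
Qed.

Lemma mxint_mulr n (M : 'M[R[i]]_n) F :
  mx_bounded_mfun F -> mxint (fun g => F g *m M) = mxint F *m M.
Proof.
move=> bF; apply/matrixP => i j; rewrite !mxE.
under eq_fun do rewrite mxE.
rewrite cint_sum => [|k]; last by apply: cbounded_mfunM => //; exact: cbounded_mfun_cst.
by apply: eq_bigr => k _; rewrite mxE cint_mulr.
Qed.

Lemma mxint_preserving n (phi : G -> G) (F : G -> 'M[R[i]]_n) :
  measure_preserving phi -> mx_bounded_mfun F ->
  mxint (fun g => F (phi g)) = mxint F.
Proof.
move=> hphi bF; apply/matrixP => i j; rewrite !mxE.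
exact: (cint_preserving (f := fun g => F g i j)).
Qed.

End HaarIntegral.

Lemma prod_sum_dffun (K : comNzRingType) (I : finType) (T_ : I -> finType)
    (F : forall i, T_ i -> K) :
  \prod_i \sum_(k : T_ i) F i k =
  \sum_(c : {dffun forall i, T_ i}) \prod_i F i (c i).
Proof.
pose P_ i := [ffun k => F i k].
transitivity (\prod_i \sum_(j in tagged_with T_ i) untag 0 (P_ i) j).
  apply: eq_bigr => i _; rewrite -(big_tag (fun i k => P_ i k) i).
  by apply: eq_bigr => k _; rewrite ffunE.
rewrite (bigA_distr_big_dep (fun i => tagged_with T_ i)) -(big_fprod _ _ P_).
rewrite (reindex (@dffun_of_fprod I T_)); last exact/onW_bij/dffun_of_fprod_bij.
by apply: eq_bigr => t _; apply: eq_bigr => i _; rewrite !ffunE.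
Qed.

Lemma sum_enum_rank (K : nmodType) (T : finType) (F : 'I_#|{: T}| -> K) :
  \sum_k F k = \sum_(c : T) F (enum_rank c).
Proof.
by rewrite (reindex (@enum_rank _)) //; exists enum_val => x _;
  [exact: enum_rankK | exact: enum_valK].
Qed.

Section TensorProduct.
Context (K : comNzRingType) (I : finType) (D : I -> nat).

Definition tconf := {dffun forall y : I, 'I_(D y)}.

Definition tensor (M : forall y, 'M[K]_(D y)) : 'M[K]_#|{: tconf}| :=
  \matrix_(i, j) \prod_y M y ((enum_val i : tconf) y) ((enum_val j : tconf) y).

Lemma tensor_mul M N : tensor M *m tensor N = tensor (fun y => M y *m N y).
Proof.
apply/matrixP => i j; rewrite !mxE sum_enum_rank.
rewrite (eq_bigr (fun c : tconf => \prod_y (M y ((enum_val i : tconf) y) (c y) *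
    N y (c y) ((enum_val j : tconf) y)))) => [|c _]; last first.
  by rewrite !mxE enum_rankK -big_split.
rewrite -(prod_sum_dffun (fun y k => M y ((enum_val i : tconf) y) k *
  N y k ((enum_val j : tconf) y))).
by apply: eq_bigr => y _; rewrite mxE.
Qed.

Lemma tensor1 : tensor (fun y => 1%:M) = 1%:M.
Proof.
apply/matrixP => i j; rewrite !mxE; have [<-|nij] := eqVneq i j.
  by apply: big1 => y _; rewrite mxE eqxx.
have [y hy] : exists y, (enum_val i : tconf) y != (enum_val j : tconf) y.
  apply/existsP; rewrite -negb_forall; apply: contra nij => /forallP h.
  by apply/eqP/enum_val_inj/ffunP => y; apply/eqP/h.
by rewrite (bigD1 y) //= mxE (negbTE hy) mul0r.
Qed.

End TensorProduct.

Section Bipartition.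
Context (V E : finType) (dim : V + E -> nat) (R : realType) (r : {set site V E}).

Local Notation conf := (conf dim).
Local Notation rconf := (rconf dim).
Local Notation op := (op dim R).

Lemma tens_tensor (M : forall x, 'M[R[i]]_(dim x)) : tens M = tensor M.
Proof. by []. Qed.

Definition tens_on (S : {set site V E}) (M : forall x, 'M[R[i]]_(dim x)) :
  'M[R[i]]_#|{: rconf S}| := tensor (fun y : {x | x \in S} => M (val y)).

Lemma in_setC_false x : x \in r = false -> x \in ~: r.
Proof. by rewrite inE => ->. Qed.

(* Matching on [x \in r] while keeping the equation supplies the membership
   proof of the subtype on either side. *)
Definition join_at (a : rconf r) (b : rconf (~: r)) (x : site V E) :
  forall t, x \in r = t -> 'I_(dim x) :=
  fun t => if t is true then fun h => a (exist _ x h)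
           else fun h => b (exist _ x (in_setC_false h)).

Definition join_conf a b : conf := [ffun x => join_at a b (erefl (x \in r))].

Lemma join_conf_in a b x (h : x \in r) : join_conf a b x = a (exist _ x h).
Proof.
rewrite ffunE; move: (erefl (x \in r)).
suff gen t (e : x \in r = t) : join_at a b e = a (exist _ x h) by apply: gen.
by case: t e => e /=; [rewrite (eq_irrelevance e h) | exfalso; rewrite h in e].
Qed.

Lemma join_conf_out a b x (h : x \in ~: r) : join_conf a b x = b (exist _ x h).
Proof.
have hn : x \in r = false by move: h; rewrite inE => /negbTE.
rewrite ffunE; move: (erefl (x \in r)).
suff gen t (e : x \in r = t) : join_at a b e = b (exist _ x h) by apply: gen.
case: t e => e /=; first by exfalso; rewrite hn in e.
by rewrite (eq_irrelevance (in_setC_false e) h).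
Qed.

Lemma restr_join_in a b : restr r (join_conf a b) = a.
Proof. by apply/ffunP => -[x hx]; rewrite ffunE /= join_conf_in. Qed.

Lemma restr_join_out a b : restr (~: r) (join_conf a b) = b.
Proof. by apply/ffunP => -[x hx]; rewrite ffunE /= join_conf_out. Qed.

Lemma join_restr c : join_conf (restr r c) (restr (~: r) c) = c.
Proof.
apply/ffunP => x; have [hx|hx] := boolP (x \in r).
  by rewrite join_conf_in ffunE.
by rewrite join_conf_out ?inE // => hx'; rewrite ffunE.
Qed.

Local Notation in_rank c := (enum_rank (restr r c)).
Local Notation out_rank c := (enum_rank (restr (~: r) c)).

Definition kron (A : 'M[R[i]]_#|{: rconf r}|) (B : 'M[R[i]]_#|{: rconf (~: r)}|) :
  op := mxo (fun c c' => A (in_rank c) (in_rank c') * B (out_rank c) (out_rank c')).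

Lemma sum_conf_split (F : conf -> R[i]) :
  \sum_(c : conf) F c = \sum_(p : 'I_#|{: rconf r}| * 'I_#|{: rconf (~: r)}|)
                          F (join_conf (enum_val p.1) (enum_val p.2)).
Proof.
rewrite (reindex (fun p : 'I_#|{: rconf r}| * 'I_#|{: rconf (~: r)}| =>
   join_conf (enum_val p.1) (enum_val p.2))) //.
exists (fun c => (in_rank c, out_rank c)) => [[p1 p2] _|c _] /=.
  by rewrite restr_join_in restr_join_out !enum_valK.
by rewrite !enum_rankK join_restr.
Qed.

Lemma kron_mul A B C D : kron A B *m kron C D = kron (A *m C) (B *m D).
Proof.
apply/matrixP => i j; rewrite !mxE sum_enum_rank sum_conf_split.
rewrite big_distrlr pair_bigA; apply: eq_bigr => -[p1 p2] _ /=.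
rewrite !mxE !enum_rankK restr_join_in restr_join_out !enum_valK.
exact: mulrACA.
Qed.

Lemma restr_eqE S (c c' : conf) :
  (restr S c == restr S c') = [forall x in S, c x == c' x].
Proof.
apply/eqP/forall_inP => [h x hx | h].
  by move/ffunP: h => /(_ (exist _ x hx)); rewrite !ffunE /= => ->.
by apply/ffunP => -[x hx]; rewrite !ffunE /=; apply/eqP/h.
Qed.

Lemma embed_kron (o : 'M[R[i]]_#|{: rconf r}|) : embed o = kron o 1%:M.
Proof. by apply/matrixP => i j; rewrite !mxE (inj_eq enum_rank_inj) restr_eqE. Qed.

Lemma prod_sub_setC (F : site V E -> R[i]) :
  \prod_x F x = (\prod_(y : {x | x \in r}) F (val y)) *
                 \prod_(y : {x | x \in ~: r}) F (val y).
Proof.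
rewrite (bigID (fun x => x \in r)) /= -big_sub; congr (_ * _).
by rewrite -big_sub; apply: eq_bigl => x; rewrite inE.
Qed.

Lemma tens_kron (M : forall x, 'M[R[i]]_(dim x)) :
  tens M = kron (tens_on r M) (tens_on (~: r) M).
Proof.
apply/matrixP => i j; rewrite !mxE !enum_rankK prod_sub_setC.
by congr (_ * _); apply: eq_bigr => y _; rewrite !ffunE.
Qed.

End Bipartition.

Section BoundedTensor.
Context (R : realType) (d : measure_display) (G : measurableType d).

Lemma mx_bounded_mfun_if1 n (b : bool) (F : G -> 'M[R[i]]_n) :
  mx_bounded_mfun F -> mx_bounded_mfun (fun g => if b then F g else 1%:M).
Proof. by case: b => // _; exact: mx_bounded_mfun_cst. Qed.

Lemma tensor_bounded (I : finType) (D : I -> nat)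
    (M : G -> forall y, 'M[R[i]]_(D y)) :
  (forall y, mx_bounded_mfun (fun g => M g y)) ->
  mx_bounded_mfun (fun g => tensor (M g)).
Proof.
move=> bM i j; under [X in cbounded_mfun X]funext do rewrite mxE.
by apply: cbounded_mfun_prod => y; exact: bM.
Qed.

End BoundedTensor.

Section CommutingIdempotents.
Context (T : pzRingType) (I : eqType) (P : I -> T).
Hypothesis P_idem : forall v, P v * P v = P v.
Hypothesis P_comm : forall v w, P v * P w = P w * P v.

Lemma prod_absorbl (s : seq I) (S : pred I) Y :
  (forall v, S v -> P v * Y = Y) -> \prod_(v <- s | S v) P v * Y = Y.
Proof.
move=> h; elim/big_rec: _ => [|v Z Sv IH]; first by rewrite mul1r.
by rewrite -mulrA IH h.
Qed.

Lemma prod_absorbr (s : seq I) (S : pred I) Y :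
  (forall v, S v -> Y * P v = Y) -> Y * \prod_(v <- s | S v) P v = Y.
Proof.
move=> h; elim/big_rec: _ => [|v Z Sv IH]; first by rewrite mulr1.
by rewrite mulrA h.
Qed.

Lemma mul_prod_idem (s : seq I) v :
  v \in s -> P v * \prod_(w <- s) P w = \prod_(w <- s) P w.
Proof.
elim: s => [|u s IH] //; rewrite inE big_cons => /predU1P [->|sv].
  by rewrite mulrA P_idem.
by rewrite mulrA P_comm -mulrA IH.
Qed.

Lemma prod_idem_mul (s : seq I) v :
  v \in s -> \prod_(w <- s) P w * P v = \prod_(w <- s) P w.
Proof.
by move=> sv; rewrite -(commr_prod s (fun w _ => P_comm v w)) mul_prod_idem.
Qed.

End CommutingIdempotents.

Lemma unitary_entry_bound (R : realType) n (A : 'M[R[i]]_n) :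
  A *m adj A = 1%:M ->
  forall i j, `|complex.Re (A i j)| <= 1 /\ `|complex.Im (A i j)| <= 1.
Proof.
move=> hA i j; have := congr1 (fun M : 'M[R[i]]_n => complex.Re (M i i)) hA.
rewrite !mxE eqxx /= Re_sum (bigD1 j) //= /adj !mxE.
have -> : forall z : R[i], complex.Re (z * Num.conj z) =
    complex.Re z ^+ 2 + complex.Im z ^+ 2.
  by case=> a b /=; rewrite !expr2; lra.
set s := \sum_(k | _) _.
have s_ge0 : 0 <= s.
  by apply: sumr_ge0 => k _; rewrite !mxE; case: (A i k) => a b /=; nra.
by move=> h; rewrite !ler_norml; split; apply/andP; split; nra.
Qed.

Lemma if1_comm (K : pzRingType) n (b1 b2 : bool) (X Y : 'M[K]_n) : ~~ (b1 && b2) ->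
  (if b1 then X else 1%:M) *m (if b2 then Y else 1%:M) =
  (if b2 then Y else 1%:M) *m (if b1 then X else 1%:M).
Proof. by case: b1; case: b2 => //= _; rewrite ?mul1mx ?mulmx1. Qed.

Lemma mulmx_comm4 (K : pzRingType) n (a1 b1 a2 b2 : 'M[K]_n) :
  b1 *m a2 = a2 *m b1 -> b2 *m a1 = a1 *m b2 -> a1 *m a2 = a2 *m a1 ->
  b1 *m b2 = b2 *m b1 -> (a1 *m b1) *m (a2 *m b2) = (a2 *m b2) *m (a1 *m b1).
Proof.
move=> h1 h2 h3 h4.
rewrite -mulmxA (mulmxA b1) h1 -mulmxA mulmxA h3 -mulmxA h4.
by rewrite -mulmxA (mulmxA b2) h2 !mulmxA.
Qed.

Section Gauge.
Context (R : realType) (d : measure_display) (G : measurableType d)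
  (mul : G -> G -> G) (inv : G -> G) (one : G) (mu : probability G R)
  (V E : finType) (src tgt : E -> V) (dim : V + E -> nat)
  (U : forall v : V, G -> 'M[R[i]]_(dim (inl v)))
  (L Rinv : forall e : E, G -> 'M[R[i]]_(dim (inr e))).
Hypothesis Hgrp : is_group mul inv one.
Hypothesis Hhaar : is_haar mul mu.
Hypothesis HU : forall v, unitary_rep mul one (U v).
Hypothesis HL : forall e, unitary_rep mul one (L e).
Hypothesis HR : forall e, unitary_rep mul one (Rinv e).
Hypothesis HLR : forall e g h, L e g *m Rinv e h = Rinv e h *m L e g.

Lemma mulgA g h k : mul g (mul h k) = mul (mul g h) k.
Proof. by case: Hgrp. Qed.
Lemma mul1g g : mul one g = g. Proof. by case: Hgrp => _ /(_ g) []. Qed.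
Lemma mulg1 g : mul g one = g. Proof. by case: Hgrp => _ /(_ g) []. Qed.
Lemma mulVg g : mul (inv g) g = one. Proof. by case: Hgrp => _ _ /(_ g) []. Qed.
Lemma mulgV g : mul g (inv g) = one. Proof. by case: Hgrp => _ _ /(_ g) []. Qed.

Lemma invgM g h : inv (mul g h) = mul (inv h) (inv g).
Proof.
have e : mul (mul g h) (mul (inv h) (inv g)) = one.
  by rewrite -mulgA (mulgA h) mulgV mul1g mulgV.
by rewrite -[inv (mul g h)]mulg1 -e mulgA mulVg mul1g.
Qed.

Section UnitaryRep.
Context n (rho : G -> 'M[R[i]]_n) (Hrho : unitary_rep mul one rho).

Lemma rep1 : rho one = 1%:M. Proof. by case: Hrho. Qed.
Lemma repM g h : rho g *m rho h = rho (mul g h). Proof. by case: Hrho => _ ->. Qed.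

Lemma repV g : rho (inv g) = adj (rho g).
Proof.
case: Hrho => _ _ hu _.
by rewrite -[rho (inv g)]mulmx1 -(hu g) mulmxA repM mulVg rep1 mul1mx.
Qed.

Lemma rep_bounded : mx_bounded_mfun rho.
Proof.
case: Hrho => _ _ hu hm i j; have [mRe mIm] := hm i j.
by split; split => //; exists 1 => g; case: (unitary_entry_bound (hu g) i j).
Qed.

Lemma repV_bounded : mx_bounded_mfun (fun g => rho (inv g)).
Proof.
move=> i j; under [X in cbounded_mfun X]funext => g do rewrite repV /adj !mxE.
exact/cbounded_mfun_conj/rep_bounded.
Qed.

End UnitaryRep.

Local Notation gsite := (gauge_site src tgt U L Rinv).
Local Notation A := (gauge src tgt U L Rinv).


Lemma if1_LR_comm e (b1 b2 : bool) g h :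
  (if b1 then Rinv e g else 1%:M) *m (if b2 then L e h else 1%:M) =
  (if b2 then L e h else 1%:M) *m (if b1 then Rinv e g else 1%:M).
Proof. by case: b1; case: b2; rewrite ?mul1mx ?mulmx1 // HLR. Qed.

Lemma if1_repM n (rho : G -> 'M[R[i]]_n) (b : bool) g h :
  unitary_rep mul one rho ->
  (if b then rho g else 1%:M) *m (if b then rho h else 1%:M) =
  (if b then rho (mul g h) else 1%:M).
Proof. by case: b => // hr; [rewrite repM | rewrite mulmx1]. Qed.


Lemma gauge_siteM v g h x : gsite v g x *m gsite v h x = gsite v (mul g h) x.
Proof.
case: x => [w|e] /=; first by case: eqP => _; [rewrite repM | rewrite mulmx1].
rewrite -mulmxA (mulmxA _ (if src e == v then _ else _)) if1_LR_comm.
by rewrite !mulmxA -(mulmxA _ _ (if tgt e == v then _ else _)) !if1_repM.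
Qed.

Lemma gauge_site1 v x : gsite v one x = 1%:M.
Proof.
case: x => [w|e] /=; first by case: ifP => // _; rewrite rep1.
by case: ifP => _; case: ifP => _; rewrite ?rep1 ?mulmx1.
Qed.

Lemma gauge_site_comm v w g h x : v != w ->
  gsite v g x *m gsite w h x = gsite w h x *m gsite v g x.
Proof.
move=> nvw; have ne u : ~~ ((u == v) && (u == w)).
  by apply: contra nvw => /andP[/eqP <- /eqP <-].
case: x => [u|e] /=; first exact: if1_comm.
by apply: mulmx_comm4; [exact: if1_LR_comm | exact: if1_LR_comm | exact: if1_comm ..].
Qed.

Lemma gaugeM v g h : A v g *m A v h = A v (mul g h).
Proof.
rewrite /gauge !tens_tensor tensor_mul; congr tensor.
exact: functional_extensionality_dep (gauge_siteM v g h).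
Qed.

Lemma gauge1 v : A v one = 1%:M.
Proof.
rewrite /gauge tens_tensor -(tensor1 R[i] dim); congr tensor.
exact: functional_extensionality_dep (gauge_site1 v).
Qed.

Lemma gauge_comm v w g h : v != w -> A v g *m A w h = A w h *m A v g.
Proof.
move=> nvw; rewrite /gauge !tens_tensor !tensor_mul; congr tensor.
exact: functional_extensionality_dep (fun x => gauge_site_comm g h x nvw).
Qed.

Lemma gaugeVK v g : A v g *m A v (inv g) = 1%:M.
Proof. by rewrite gaugeM mulgV gauge1. Qed.

Lemma tens_on_gaugeM S v g h :
  tens_on S (gsite v g) *m tens_on S (gsite v h) = tens_on S (gsite v (mul g h)).
Proof.
rewrite /tens_on tensor_mul; congr tensor.
by apply: functional_extensionality_dep => x; exact: gauge_siteM.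
Qed.

Lemma tens_on_gauge1 S v : tens_on S (gsite v one) = 1%:M.
Proof.
rewrite /tens_on -(tensor1 R[i] (fun y : {x | x \in S} => dim (val y))).
by congr tensor; apply: functional_extensionality_dep => x; exact: gauge_site1.
Qed.

(* [inv] need not be measurable; along [inv] boundedness comes from
   [rho (inv g) = adj (rho g)] instead. *)
Definition reps_bounded_along (k : G -> G) := forall n (rho : G -> 'M[R[i]]_n),
  unitary_rep mul one rho -> mx_bounded_mfun (fun g => rho (k g)).

Lemma reps_bounded_along_id : reps_bounded_along id.
Proof. by move=> n rho; exact: rep_bounded. Qed.

Lemma reps_bounded_along_inv : reps_bounded_along inv.
Proof. by move=> n rho; exact: repV_bounded. Qed.



Section BoundedAlong.
Context (k : G -> G) (Hk : reps_bounded_along k).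

Lemma gauge_site_bounded v x : mx_bounded_mfun (fun g => gsite v (k g) x).
Proof.
case: x => [w|e] /=; first exact/mx_bounded_mfun_if1/Hk.
by apply: mx_bounded_mfunM; apply/mx_bounded_mfun_if1/Hk.
Qed.

Lemma gauge_bounded_along v : mx_bounded_mfun (fun g => A v (k g)).
Proof. by apply: tensor_bounded => x; exact: gauge_site_bounded. Qed.

Lemma tens_on_gauge_bounded_along S v :
  mx_bounded_mfun (fun g => tens_on S (gsite v (k g))).
Proof. by apply: tensor_bounded => y; exact: gauge_site_bounded. Qed.

End BoundedAlong.

Local Notation P := (Pi src tgt U L Rinv mu).

Lemma PiE v : P v = mxint mu (A v). Proof. by []. Qed.

Lemma mxint_mulgl n h (F : G -> 'M[R[i]]_n) : mx_bounded_mfun F ->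
  mxint mu (fun g => F (mul h g)) = mxint mu F.
Proof. by case: (Hhaar h) => ml _ pl _; apply: mxint_preserving. Qed.

Lemma mxint_mulgr n h (F : G -> 'M[R[i]]_n) : mx_bounded_mfun F ->
  mxint mu (fun g => F (mul g h)) = mxint mu F.
Proof. by case: (Hhaar h) => _ mr _ pr; apply: mxint_preserving. Qed.

Lemma gauge_bounded v : mx_bounded_mfun (A v).
Proof. exact: (gauge_bounded_along reps_bounded_along_id). Qed.

Lemma gauge_Pi v g : A v g *m P v = P v.
Proof.
rewrite PiE -(mxint_mull mu _ (gauge_bounded v)).
have -> : (fun h => A v g *m A v h) = fun h => A v (mul g h).
  by apply/funext => h; exact: gaugeM.
exact: (mxint_mulgl g (gauge_bounded v)).
Qed.

Lemma Pi_gauge v g : P v *m A v g = P v.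
Proof.
rewrite PiE -(mxint_mulr mu _ (gauge_bounded v)).
have -> : (fun h => A v h *m A v g) = fun h => A v (mul h g).
  by apply/funext => h; exact: gaugeM.
exact: (mxint_mulgr g (gauge_bounded v)).
Qed.

Lemma Pi_idem v : P v *m P v = P v.
Proof.
rewrite {2}PiE -(mxint_mull mu _ (gauge_bounded v)).
by rewrite (_ : (fun g => _) = fun _ => P v) ?mxint_cst //; exact/funext/Pi_gauge.
Qed.

Lemma Pi_gauge_comm v w h : v != w -> P v *m A w h = A w h *m P v.
Proof.
move=> nvw; rewrite PiE -(mxint_mulr mu _ (gauge_bounded v)).
rewrite -(mxint_mull mu _ (gauge_bounded v)).
by congr mxint; apply/funext => g; rewrite gauge_comm.
Qed.

Lemma Pi_comm v w : P v *m P w = P w *m P v.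
Proof.
have [->//|nvw] := eqVneq v w.
have e : mxint mu (fun g => P v *m A w g) = mxint mu (fun g => A w g *m P v).
  by congr mxint; apply/funext => g; exact: Pi_gauge_comm.
exact: etrans (esym (mxint_mull mu (P v) (gauge_bounded w)))
              (etrans e (mxint_mulr mu (P v) (gauge_bounded w))).
Qed.

Definition twirl v (Y : op dim R) : op dim R :=
  mxint mu (fun g => A v (inv g) *m Y *m A v g).

Lemma twirl_integrand_bounded v (Y : op dim R) :
  mx_bounded_mfun (fun g => A v (inv g) *m Y *m A v g).
Proof.
apply: mx_bounded_mfunM; last exact: gauge_bounded.
apply: mx_bounded_mfunM; last exact: mx_bounded_mfun_cst.
exact: gauge_bounded_along reps_bounded_along_inv v.
Qed.

Lemma gauge_twirl v h Y : A v h *m twirl v Y = twirl v Y *m A v h.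
Proof.
have conj_twirl : A v (inv h) *m twirl v Y *m A v h = twirl v Y.
  rewrite -(mxint_mull mu _ (twirl_integrand_bounded v Y)).
  rewrite -mxint_mulr; last first.
    exact/mx_bounded_mfunMl/twirl_integrand_bounded.
  rewrite [RHS]/twirl -(mxint_mulgr h (twirl_integrand_bounded v Y)).
  by congr mxint; apply/funext => g; rewrite invgM -!gaugeM !mulmxA.
by rewrite -{1}conj_twirl !mulmxA gaugeVK mul1mx.
Qed.

Lemma Pi_twirl v Y : P v *m twirl v Y = twirl v Y *m P v.
Proof.
rewrite PiE -(mxint_mulr mu _ (gauge_bounded v)) -(mxint_mull mu _ (gauge_bounded v)).
by congr mxint; apply/funext => g; rewrite gauge_twirl.
Qed.

Lemma Pi_twirl_neq w v Y : w != v -> P w *m Y = Y *m P w ->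
  P w *m twirl v Y = twirl v Y *m P w.
Proof.
move=> nwv PY; rewrite -(mxint_mull mu _ (twirl_integrand_bounded v Y)).
rewrite -(mxint_mulr mu _ (twirl_integrand_bounded v Y)).
congr mxint; apply/funext => g.
by rewrite !mulmxA Pi_gauge_comm // -(mulmxA _ _ Y) PY mulmxA -(mulmxA _ (P w))
  Pi_gauge_comm // !mulmxA.
Qed.

Lemma twirl_sandwich (Q : op dim R) v Y :
  (forall g, Q *m A v g = Q) -> (forall g, A v g *m Q = Q) ->
  Q *m twirl v Y *m Q = Q *m Y *m Q.
Proof.
move=> QA AQ; rewrite -(mxint_mull mu _ (twirl_integrand_bounded v Y)) -mxint_mulr.
  rewrite -[RHS](mxint_cst mu); congr mxint; apply/funext => g.
  by rewrite !mulmxA QA -!mulmxA AQ.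
exact/mx_bounded_mfunMl/twirl_integrand_bounded.
Qed.

Lemma mxint_kron1 r (f : G -> 'M[R[i]]_#|{: rconf dim r}|) : mx_bounded_mfun f ->
  mxint mu (fun g => kron (f g) 1%:M) = kron (mxint mu f) 1%:M.
Proof.
move=> bf; apply/matrixP => i j; rewrite !mxE.
by under eq_fun do rewrite !mxE; rewrite cint_mulr // mxE.
Qed.

(* Conjugating [y (x) 1] by [A_v(g) = a (x) b] gives [a^-1 y a (x) 1]. *)
Lemma twirl_in_alg (r : {set site V E}) v Y :
  Defs.in_alg r Y -> Defs.in_alg r (twirl v Y).
Proof.
case=> y ->; rewrite embed_kron; pose Ar g := tens_on r (gsite v g).
exists (mxint mu (fun g => Ar (inv g) *m y *m Ar g)).
rewrite embed_kron -mxint_kron1; last first.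
  apply: mx_bounded_mfunM.
    apply: mx_bounded_mfunM; last exact: mx_bounded_mfun_cst.
    exact: tens_on_gauge_bounded_along reps_bounded_along_inv r v.
  exact: tens_on_gauge_bounded_along reps_bounded_along_id r v.
congr mxint; apply/funext => g.
by rewrite /gauge !(tens_kron r) !kron_mul mulmx1 tens_on_gaugeM mulVg tens_on_gauge1.
Qed.

Definition twirls (s : seq V) (Y : op dim R) : op dim R := foldr twirl Y s.

Lemma twirls_in_alg (r : {set site V E}) s Y :
  Defs.in_alg r Y -> Defs.in_alg r (twirls s Y).
Proof. by elim: s => [|v s IH] //= /IH; exact: twirl_in_alg. Qed.

Lemma Pi_twirls s Y w : w \in s -> P w *m twirls s Y = twirls s Y *m P w.
Proof.
elim: s => [|v s IH] //; rewrite inE /=; have [->|nwv] := eqVneq w v.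
  by rewrite Pi_twirl.
by move=> /= sw; apply: Pi_twirl_neq => //; exact: IH.
Qed.

Local Notation PGI := (Pi_GI src tgt U L Rinv mu).

Lemma PGIE : PGI = \prod_(v <- index_enum V) P v. Proof. by []. Qed.

Lemma Pi_PGI v : P v * PGI = PGI.
Proof. exact: mul_prod_idem Pi_idem Pi_comm _ _ (mem_index_enum v). Qed.

Lemma PGI_Pi v : PGI * P v = PGI.
Proof. exact: prod_idem_mul Pi_idem Pi_comm _ _ (mem_index_enum v). Qed.

Lemma PGI_gauge v g : PGI * A v g = PGI.
Proof. by rewrite -{1}(PGI_Pi v) -mulrA [P v * _]Pi_gauge PGI_Pi. Qed.

Lemma gauge_PGI v g : A v g * PGI = PGI.
Proof. by rewrite -{1}(Pi_PGI v) mulrA [A v g * _]gauge_Pi Pi_PGI. Qed.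

Lemma PGI_idem : PGI * PGI = PGI.
Proof. by rewrite {1}PGIE prod_absorbl // => v _; exact: Pi_PGI. Qed.

Lemma PGI_twirls s Y : PGI * twirls s Y * PGI = PGI * Y * PGI.
Proof.
elim: s => [|v s IH] //=; rewrite -IH.
by apply: twirl_sandwich => g; [exact: PGI_gauge | exact: gauge_PGI].
Qed.

Section Subregion.
Variable r : {set site V E}.
Local Notation PV := (Pi_Vr src tgt U L Rinv mu r).

Lemma PVr_PGI : PV * PGI = PGI.
Proof. by rewrite prod_absorbl // => v _; exact: Pi_PGI. Qed.

Lemma PGI_PVr : PGI * PV = PGI.
Proof. by rewrite prod_absorbr // => v _; exact: PGI_Pi. Qed.

Lemma sandwich_in_hat_alg O : Defs.in_alg r O ->
  exists Ohat, [/\ in_hat_alg src tgt U L Rinv mu r Ohat,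
                   Ohat *m PGI = PGI *m Ohat & PGI *m O *m PGI = Ohat *m PGI].
Proof.
move=> hO; set O' := twirls (index_enum V) O.
have O'_PGI : O' * PGI = PGI * O'.
  by apply: commr_prod => v _; apply/esym/Pi_twirls; exact: mem_index_enum.
have hatPGI : PV * O' * PV * PGI = PGI * O'.
  by rewrite -mulrA PVr_PGI -mulrA O'_PGI mulrA PVr_PGI.
exists (PV * O' * PV); rewrite !mulmxE hatPGI; split.
- by exists O'; split; [exact: twirls_in_alg | rewrite !mulmxE].
- by rewrite !mulrA PGI_PVr -O'_PGI -mulrA PGI_PVr.
- by rewrite -(PGI_twirls (index_enum V)) -/O' -mulrA O'_PGI mulrA PGI_idem.
Qed.

Lemma in_hat_alg_sandwich Ohat : in_hat_alg src tgt U L Rinv mu r Ohat ->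
  Ohat *m PGI = PGI *m Ohat ->
  exists O, Defs.in_alg r O /\ Ohat *m PGI = PGI *m O *m PGI.
Proof.
case=> O [hO ->]; rewrite !mulmxE => comm_hat; exists O; split => //.
rewrite -{1}PGI_idem mulrA comm_hat.
by rewrite !mulrA PGI_PVr -mulrA PVr_PGI.
Qed.

End Subregion.
End Gauge.

(* [GRing.Theory] shadows [Defs.in_alg] with the scalar embedding [GRing.in_alg]. *)
Import Defs.

Theorem corollary4
  (R : realType) (d : measure_display) (G : measurableType d)
  (mul : G -> G -> G) (inv : G -> G) (one : G)
  (mu : probability G R)
  (V E : finType) (src tgt : E -> V) (dim : V + E -> nat)
  (U : forall v : V, G -> 'M[R[i]]_(dim (inl v)))
  (L Rinv : forall e : E, G -> 'M[R[i]]_(dim (inr e)))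
  (Hgrp : is_group mul inv one)
  (Hhaar : is_haar mul mu)
  (HU : forall v, unitary_rep mul one (U v))
  (HL : forall e, unitary_rep mul one (L e))
  (HR : forall e, unitary_rep mul one (Rinv e))
  (HLR : forall e g h, L e g *m Rinv e h = Rinv e h *m L e g)
  (r : {set site V E}) (X : op dim R) :
  (exists O : op dim R, in_alg r O /\
     X = Pi_GI src tgt U L Rinv mu *m O *m Pi_GI src tgt U L Rinv mu)
  <->
  (exists Ohat : op dim R,
     [/\ in_hat_alg src tgt U L Rinv mu r Ohat,
         Ohat *m Pi_GI src tgt U L Rinv mu = Pi_GI src tgt U L Rinv mu *m Ohat
       & X = Ohat *m Pi_GI src tgt U L Rinv mu]).
Proof.
split=> [[O [hO ->]] | [Ohat [hat comm_hat ->]]].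
  exact (sandwich_in_hat_alg src tgt Hgrp Hhaar HU HL HR HLR hO).
exact (in_hat_alg_sandwich Hhaar HU HL HR HLR hat comm_hat).
Qed.
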